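(* Let $\ell:K(H\times\mathrm{Id})\to HM$ be an abstract GSOS rule with $\ell$-interpretation $b$, let $k=c^{-1}\cdot Hb^\sharp:HMC\to C$, let $V$ be an endofunctor with $HM+V$ iteratable. Then every guarded recursive program scheme $e:V\to T^{HM+V}$ has a unique interpreted solution $s:VC\to C$ in the cia $(C,k)$, and $[k,s]:(HM+V)C\to C$ is a completely iterative algebra for $HM+V$.
   Context: Let $\mathcal A$ be a category with binary products and coproducts, let $H:\mathcal A\to\mathcal A$ be a functor with a terminal coalgebra $c:C\to HC$ (an isomorphism by Lambek's lemma), and let $K:\mathcal A\to\mathcal A$ be a functor such that every object $X$ has a free $K$-algebra $\varphi_X:KMX\to MX$ with universal morphism $\eta_X:X\to MX$; $(M,\eta,\mu)$ is the free monad on $K$. For a $K$-algebra $a:KA\to A$ let $a^\sharp:MA\to A$ be the unique $K$-algebra homomorphism with $a^\sharp\cdot\eta_A=\mathrm{id}_A$. An abstract GSOS rule is a natural transformation $\ell:K(H\times\mathrm{Id})\to HM$; its $\ell$-interpretation is the unique $b:KC\to C$ with $c\cdot b=Hb^\sharp\cdot\ell_C\cdot K\langle c,\mathrm{id}_C\rangle$. A $G$-algebra $a:GA\to A$ is a completely iterative algebra (cia) if every $e:X\to GX+A$ has a unique $e^\dagger:X\to A$ with $e^\dagger=[a,\mathrm{id}_A]\cdot(Ge^\dagger+\mathrm{id}_A)\cdot e$; $(C,k)$ is a cia for $HM$. An endofunctor $G$ is iteratable if for each $X$ a terminal coalgebra $T^GX$ for $G(-)+X$ exists, with inverse structure $[\tau^G_X,\eta^G_X]$;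 $T^G$ is a monad and $\kappa^G=\tau^G\cdot G\eta^G$. For an endofunctor $L$ with cia $(A,a)$ for $L$ and $L+V$ iteratable: a recursive program scheme is a natural transformation $e:V\to T^{L+V}$; it is guarded if $e=\tau^{L+V}\cdot(\mathrm{inl}\,T^{L+V})\cdot f$ for some natural $f:V\to LT^{L+V}$; an interpreted solution of $e$ in $(A,a)$ is a $V$-algebra $s:VA\to A$ for which there is an Eilenberg–Moore algebra $\beta:T^{L+V}A\to A$ for $T^{L+V}$ with $\beta\cdot\kappa^{L+V}_A=[a,s]$ and $s=\beta\cdot e_A$. Here $L=HM$. *)

From Stdlib Require Import Setoid.

Set Implicit Arguments.
Unset Strict Implicit.

Record Category := {
  Ob :> Type;
  Hom : Ob -> Ob -> Type;
  idm : forall X, Hom X X;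
  comp : forall X Y Z, Hom Y Z -> Hom X Y -> Hom X Z;
  comp_id_l : forall X Y (f : Hom X Y), comp (idm Y) f = f;
  comp_id_r : forall X Y (f : Hom X Y), comp f (idm X) = f;
  comp_assoc : forall X Y Z W (f : Hom Z W) (g : Hom Y Z) (h : Hom X Y),
      comp f (comp g h) = comp (comp f g) h
}.

Arguments Hom {c} X Y.
Arguments idm {c} X.
Arguments comp {c X Y Z} g f.
Arguments comp_id_l {c X Y} f.
Arguments comp_id_r {c X Y} f.
Arguments comp_assoc {c X Y Z W} f g h.

Notation "g ∘ f" := (comp g f) (at level 40, left associativity).

Record Functor (A B : Category) := {
  fobj :> A -> B;
  fmap : forall X Y : A, Hom X Y -> Hom (fobj X) (fobj Y);
  fmap_id : forall X : A, fmap (idm X) = idm (fobj X);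
  fmap_comp : forall (X Y Z : A) (g : Hom Y Z) (f : Hom X Y),
      fmap (g ∘ f) = fmap g ∘ fmap f
}.

Arguments fmap {A B} _ {X Y} _.

Record Products (A : Category) := {
  prod : A -> A -> A;
  pr1 : forall X Y, Hom (prod X Y) X;
  pr2 : forall X Y, Hom (prod X Y) Y;
  pair : forall Z X Y, Hom Z X -> Hom Z Y -> Hom Z (prod X Y);
  pair_pr1 : forall Z X Y (f : Hom Z X) (g : Hom Z Y), pr1 X Y ∘ pair f g = f;
  pair_pr2 : forall Z X Y (f : Hom Z X) (g : Hom Z Y), pr2 X Y ∘ pair f g = g;
  pair_unique : forall Z X Y (f : Hom Z X) (g : Hom Z Y) (h : Hom Z (prod X Y)),
      pr1 X Y ∘ h = f -> pr2 X Y ∘ h = g -> h = pair f g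
}.

Record Coproducts (A : Category) := {
  cop : A -> A -> A;
  cinl : forall X Y, Hom X (cop X Y);
  cinr : forall X Y, Hom Y (cop X Y);
  copair : forall X Y Z, Hom X Z -> Hom Y Z -> Hom (cop X Y) Z;
  copair_inl : forall X Y Z (f : Hom X Z) (g : Hom Y Z), copair f g ∘ cinl X Y = f;
  copair_inr : forall X Y Z (f : Hom X Z) (g : Hom Y Z), copair f g ∘ cinr X Y = g;
  copair_unique : forall X Y Z (f : Hom X Z) (g : Hom Y Z) (h : Hom (cop X Y) Z),
      h ∘ cinl X Y = f -> h ∘ cinr X Y = g -> h = copair f g
}.

Arguments prod {A} _ X Y.
Arguments pr1 {A} _ X Y.
Arguments pr2 {A} _ X Y.
Arguments pair {A} _ {Z X Y} f g.
Arguments cop {A} _ X Y.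
Arguments cinl {A} _ X Y.
Arguments cinr {A} _ X Y.
Arguments copair {A} _ {X Y Z} f g.

Unset Implicit Arguments.

Section Constructions.
Context {A : Category} (S : Coproducts A).

Definition copmap {X Y X' Y'} (f : Hom X X') (g : Hom Y Y') :
  Hom (cop S X Y) (cop S X' Y') :=
  copair S (cinl S X' Y' ∘ f) (cinr S X' Y' ∘ g).

Lemma copmap_id X Y : copmap (idm X) (idm Y) = idm (cop S X Y).
Proof.
  symmetry; apply copair_unique; rewrite comp_id_l, comp_id_r; reflexivity.
Qed.

Lemma copmap_comp X Y X' Y' X'' Y'' (f : Hom X X') (g : Hom Y Y')
  (f' : Hom X' X'') (g' : Hom Y' Y'') :
  copmap (f' ∘ f) (g' ∘ g) = copmap f' g' ∘ copmap f g.
Proof.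
  unfold copmap; symmetry; apply copair_unique.
  - rewrite <- comp_assoc, copair_inl, comp_assoc, copair_inl, comp_assoc.
    reflexivity.
  - rewrite <- comp_assoc, copair_inr, comp_assoc, copair_inr, comp_assoc.
    reflexivity.
Qed.

Definition CopF (F G : Functor A A) : Functor A A.
Proof.
  refine {| fobj := fun X => cop S (F X) (G X);
            fmap := fun X Y f => copmap (fmap F f) (fmap G f) |}.
  - intros X; rewrite !fmap_id; apply copmap_id.
  - intros X Y Z g f; rewrite !fmap_comp; apply copmap_comp.
Defined.

Definition ConstF (X : A) : Functor A A.
Proof.
  refine {| fobj := fun _ => X; fmap := fun _ _ _ => idm X |}.
  - reflexivity.
  - intros; symmetry; apply comp_id_l.
Defined.

End Constructions.

Definition FComp {A : Category} (F G : Functor A A) : Functor A A.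
Proof.
  refine {| fobj := fun X => F (G X); fmap := fun X Y f => fmap F (fmap G f) |}.
  - intros X; rewrite !fmap_id; reflexivity.
  - intros X Y Z g f; rewrite !fmap_comp; reflexivity.
Defined.

Record TerminalCoalgebra {A : Category} (F : Functor A A) := {
  tc_car : A;
  tc_str : Hom tc_car (F tc_car);
  tc_unfold : forall {X}, Hom X (F X) -> Hom X tc_car;
  tc_unfold_hom : forall X (x : Hom X (F X)),
      tc_str ∘ tc_unfold x = fmap F (tc_unfold x) ∘ x;
  tc_unfold_unique : forall X (x : Hom X (F X)) (h : Hom X tc_car),
      tc_str ∘ h = fmap F h ∘ x -> h = tc_unfold x
}.

Arguments tc_car {A F} _.
Arguments tc_str {A F} _.
Arguments tc_unfold {A F} _ {X} x.

(* The inverse of the structure map (Lambek's lemma): the unique coalgebra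
   morphism from (F C, F c) to (C, c). *)
Definition tc_inv {A : Category} {F : Functor A A} (t : TerminalCoalgebra F) :
  Hom (F (tc_car t)) (tc_car t) :=
  tc_unfold t (fmap F (tc_str t)).

Record FreeMonadOn {A : Category} (K : Functor A A) := {
  FM : Functor A A;
  fm_eta : forall X, Hom X (FM X);
  fm_phi : forall X, Hom (K (FM X)) (FM X);
  fm_eta_nat : forall X Y (f : Hom X Y), fmap FM f ∘ fm_eta X = fm_eta Y ∘ f;
  fm_phi_nat : forall X Y (f : Hom X Y),
      fmap FM f ∘ fm_phi X = fm_phi Y ∘ fmap K (fmap FM f);
  fm_ext : forall {X Y}, Hom (K Y) Y -> Hom X Y -> Hom (FM X) Y;
  fm_ext_eta : forall X Y (a : Hom (K Y) Y) (f : Hom X Y),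
      fm_ext a f ∘ fm_eta X = f;
  fm_ext_hom : forall X Y (a : Hom (K Y) Y) (f : Hom X Y),
      fm_ext a f ∘ fm_phi X = a ∘ fmap K (fm_ext a f);
  fm_ext_unique : forall X Y (a : Hom (K Y) Y) (f : Hom X Y) (h : Hom (FM X) Y),
      h ∘ fm_eta X = f -> h ∘ fm_phi X = a ∘ fmap K h -> h = fm_ext a f
}.

Arguments FM {A K} _.
Arguments fm_eta {A K} _ X.
Arguments fm_phi {A K} _ X.
Arguments fm_ext {A K} _ {X Y} a f.

Definition sharp {A : Category} {K : Functor A A} (m : FreeMonadOn K)
  {Y : A} (a : Hom (K Y) Y) : Hom (FM m Y) Y := fm_ext m a (idm Y).

Section GSOS.
Context {A : Category} (P : Products A) (H K : Functor A A) (m : FreeMonadOn K).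

Definition is_GSOS_rule
  (l : forall X, Hom (K (prod P (H X) X)) (H (FM m X))) : Prop :=
  forall X Y (f : Hom X Y),
    fmap H (fmap (FM m) f) ∘ l X
    = l Y ∘ fmap K (pair P (fmap H f ∘ pr1 P (H X) X) (f ∘ pr2 P (H X) X)).

Definition interpretation_eq (t : TerminalCoalgebra H)
  (l : forall X, Hom (K (prod P (H X) X)) (H (FM m X)))
  (b : Hom (K (tc_car t)) (tc_car t)) : Prop :=
  tc_str t ∘ b
  = fmap H (sharp m b) ∘ l (tc_car t) ∘ fmap K (pair P (tc_str t) (idm (tc_car t))).

Definition is_interpretation (t : TerminalCoalgebra H)
  (l : forall X, Hom (K (prod P (H X) X)) (H (FM m X)))
  (b : Hom (K (tc_car t)) (tc_car t)) : Prop :=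
  interpretation_eq t l b /\
  forall b', interpretation_eq t l b' -> b' = b.

End GSOS.

Section Iteration.
Context {A : Category} (S : Coproducts A).

Definition is_cia (G : Functor A A) {X : A} (a : Hom (G X) X) : Prop :=
  forall (Y : A) (e : Hom Y (cop S (G Y) X)),
    exists! h : Hom Y X, h = copair S a (idm X) ∘ copmap S (fmap G h) (idm X) ∘ e.

Definition Iteratable (G : Functor A A) : Type :=
  forall X : A, TerminalCoalgebra (CopF S G (ConstF X)).

Context {G : Functor A A} (It : Iteratable G).

Definition TG (X : A) : A := tc_car (It X).
Definition outG (X : A) : Hom (TG X) (cop S (G (TG X)) X) := tc_str (It X).
Definition inG (X : A) : Hom (cop S (G (TG X)) X) (TG X) := tc_inv (It X).
Definition tauG (X : A) : Hom (G (TG X)) (TG X) := inG X ∘ cinl S (G (TG X)) X.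
Definition etaG (X : A) : Hom X (TG X) := inG X ∘ cinr S (G (TG X)) X.
Definition kappaG (X : A) : Hom (G X) (TG X) := tauG X ∘ fmap G (etaG X).

Definition TGmap {X Y : A} (f : Hom X Y) : Hom (TG X) (TG Y) :=
  tc_unfold (It Y) (copmap S (idm (G (TG X))) f ∘ outG X).

(* multiplication mu_X : T T X -> T X of the monad T^G: the unique morphism
   with mu . eta_{TX} = id and mu . tau_{TX} = tau_X . G mu, obtained as
   f . inl where f : TTX + TX -> TX is the coalgebra morphism out of delta *)
Definition muG (X : A) : Hom (TG (TG X)) (TG X) :=
  let TX := TG X in
  let TTX := TG TX in
  let base := copmap S (fmap G (cinr S TTX TX)) (idm X) ∘ outG X in
  let delta : Hom (cop S TTX TX) (cop S (G (cop S TTX TX)) X) :=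
      copair S (copair S (cinl S (G (cop S TTX TX)) X ∘ fmap G (cinl S TTX TX)) base
                 ∘ outG TX) base in
  tc_unfold (It X) delta ∘ cinl S TTX TX.

Definition is_EM_algebra {X : A} (beta : Hom (TG X) X) : Prop :=
  beta ∘ etaG X = idm X /\ beta ∘ muG X = beta ∘ TGmap beta.

End Iteration.

Section RPS.
Context {A : Category} (S : Coproducts A) (L V : Functor A A)
        (It : Iteratable S (CopF S L V)).

Definition is_rps (e : forall X, Hom (V X) (TG S It X)) : Prop :=
  forall X Y (f : Hom X Y), TGmap S It f ∘ e X = e Y ∘ fmap V f.

Definition is_guarded_rps (e : forall X, Hom (V X) (TG S It X)) : Prop :=
  exists f : forall X, Hom (V X) (L (TG S It X)),
    (forall X Y (g : Hom X Y), fmap L (TGmap S It g) ∘ f X = f Y ∘ fmap V g) /\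
    (forall X, e X = tauG S It X ∘ cinl S (L (TG S It X)) (V (TG S It X)) ∘ f X).

Definition is_interpreted_solution (e : forall X, Hom (V X) (TG S It X))
  {X : A} (a : Hom (L X) X) (s : Hom (V X) X) : Prop :=
  exists beta : Hom (TG S It X) X,
    is_EM_algebra S It beta /\
    beta ∘ kappaG S It X = copair S a s /\
    s = beta ∘ e X.

End RPS.

(* First, (C, k) is a cia for HM.  A flat equation e : Y -> HMY + C, together
   with c on the C-summand, is an HM-coalgebra zeta on Y + C.  The GSOS rule
   extends zeta to an H-coalgebra on M(Y + C), and the unique coalgebra
   morphism u from it into C is a K-algebra morphism for b.  Then u . eta . inl
   solves e; conversely, for any solution h the b-extension of [h, id] is a
   coalgebra morphism, hence equals u.

   Second, let (X, a) be any cia for L and e = tau . inl . f a guarded scheme.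
   Reading the L-nodes of T X with a and the V-nodes v with a . L(beta . mu) . f v
   is a flat equation for L whose solution beta : T X -> X is an
   Eilenberg-Moore algebra with beta . kappa = [a, s], s := a . L beta . f.
   Guardedness forces the algebra of every interpreted solution to satisfy the
   same flat equation, which gives uniqueness; and a flat equation for L + V is
   solved by unfolding it into T X and evaluating with beta. *)


Section CoproductLaws.
Context {A : Category} (S : Coproducts A).
Implicit Types X Y Z W : Ob A.

Lemma comp_assoc_eq {X Y Z} {f : Hom Y Z} {g : Hom X Y} {h : Hom X Z} (E : f ∘ g = h)
  {W} (x : Hom W X) : f ∘ (g ∘ x) = h ∘ x.
Proof. rewrite comp_assoc, E; reflexivity. Qed.

Lemma fmap_comp_assoc (F : Functor A A) {X Y Z W} (g : Hom Y Z) (f : Hom X Y)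
  (x : Hom W (F X)) : fmap F g ∘ (fmap F f ∘ x) = fmap F (g ∘ f) ∘ x.
Proof. rewrite fmap_comp, comp_assoc; reflexivity. Qed.

Lemma copair_inl_assoc {X Y Z W} (f : Hom X Z) (g : Hom Y Z) (x : Hom W X) :
  copair S f g ∘ (cinl S X Y ∘ x) = f ∘ x.
Proof. rewrite comp_assoc, copair_inl; reflexivity. Qed.

Lemma copair_inr_assoc {X Y Z W} (f : Hom X Z) (g : Hom Y Z) (x : Hom W Y) :
  copair S f g ∘ (cinr S X Y ∘ x) = g ∘ x.
Proof. rewrite comp_assoc, copair_inr; reflexivity. Qed.

Lemma copair_ext {X Y Z} (h k : Hom (cop S X Y) Z) :
  h ∘ cinl S X Y = k ∘ cinl S X Y -> h ∘ cinr S X Y = k ∘ cinr S X Y -> h = k.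
Proof.
  intros E1 E2. rewrite (@copair_unique _ S _ _ _ _ _ h eq_refl eq_refl).
  rewrite (@copair_unique _ S _ _ _ _ _ k eq_refl eq_refl), E1, E2; reflexivity.
Qed.

Lemma comp_copair {X Y Z Z'} (h : Hom Z Z') (f : Hom X Z) (g : Hom Y Z) :
  h ∘ copair S f g = copair S (h ∘ f) (h ∘ g).
Proof.
  apply copair_unique; rewrite <- comp_assoc;
    [rewrite copair_inl | rewrite copair_inr]; reflexivity.
Qed.

Lemma comp_copair_assoc {X Y Z Z' W} (h : Hom Z Z') (f : Hom X Z) (g : Hom Y Z)
  (x : Hom W _) : h ∘ (copair S f g ∘ x) = copair S (h ∘ f) (h ∘ g) ∘ x.
Proof. rewrite comp_assoc, comp_copair; reflexivity. Qed.

Lemma copair_eta {X Y Z} (h : Hom (cop S X Y) Z) :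
  copair S (h ∘ cinl S X Y) (h ∘ cinr S X Y) = h.
Proof. symmetry; apply copair_unique; reflexivity. Qed.

Lemma copair_inl_inr {X Y} : copair S (cinl S X Y) (cinr S X Y) = idm _.
Proof. symmetry; apply copair_unique; apply comp_id_l. Qed.

Lemma copmap_def {X Y X' Y'} (f : Hom X X') (g : Hom Y Y') :
  copmap S f g = copair S (cinl S X' Y' ∘ f) (cinr S X' Y' ∘ g).
Proof. reflexivity. Qed.

End CoproductLaws.

Section ProductLaws.
Context {A : Category} (P : Products A).

Lemma pair_comp {Z Z' X Y : A} (f : Hom Z X) (g : Hom Z Y) (h : Hom Z' Z) :
  pair P f g ∘ h = pair P (f ∘ h) (g ∘ h).
Proof.
  apply pair_unique; rewrite comp_assoc;
    [rewrite pair_pr1 | rewrite pair_pr2]; reflexivity.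
Qed.

Lemma pair_comp_assoc {Z Z' X Y W : A} (f : Hom Z X) (g : Hom Z Y) (h : Hom Z' Z)
  (x : Hom W Z') : pair P f g ∘ (h ∘ x) = pair P (f ∘ h) (g ∘ h) ∘ x.
Proof. rewrite comp_assoc, pair_comp; reflexivity. Qed.

Lemma pair_pr1_assoc {Z X Y W : A} (f : Hom Z X) (g : Hom Z Y) (x : Hom W Z) :
  pr1 P X Y ∘ (pair P f g ∘ x) = f ∘ x.
Proof. rewrite comp_assoc, pair_pr1; reflexivity. Qed.

Lemma pair_pr2_assoc {Z X Y W : A} (f : Hom Z X) (g : Hom Z Y) (x : Hom W Z) :
  pr2 P X Y ∘ (pair P f g ∘ x) = g ∘ x.
Proof. rewrite comp_assoc, pair_pr2; reflexivity. Qed.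

End ProductLaws.

Section TerminalCoalgebraLaws.
Context {A : Category} {F : Functor A A} (t : TerminalCoalgebra F).

Lemma tc_hom_unique {X} (x : Hom X (F X)) (h1 h2 : Hom X (tc_car t)) :
  tc_str t ∘ h1 = fmap F h1 ∘ x -> tc_str t ∘ h2 = fmap F h2 ∘ x -> h1 = h2.
Proof.
  intros E1 E2.
  rewrite (tc_unfold_unique F t _ x h1 E1), (tc_unfold_unique F t _ x h2 E2).
  reflexivity.
Qed.

Lemma tc_inv_str : tc_inv t ∘ tc_str t = idm _.
Proof.
  apply (tc_hom_unique (tc_str t)).
  - unfold tc_inv. rewrite comp_assoc, (tc_unfold_hom F t), fmap_comp. reflexivity.
  - rewrite comp_id_r, fmap_id, comp_id_l. reflexivity.
Qed.

Lemma tc_str_inv : tc_str t ∘ tc_inv t = idm _.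
Proof.
  unfold tc_inv at 1. rewrite (tc_unfold_hom F t), <- fmap_comp. fold (tc_inv t).
  rewrite tc_inv_str, fmap_id. reflexivity.
Qed.

Lemma tc_str_inv_assoc {W : A} (x : Hom W _) : tc_str t ∘ (tc_inv t ∘ x) = x.
Proof. rewrite comp_assoc, tc_str_inv, comp_id_l; reflexivity. Qed.

Lemma tc_str_mono {X : A} (x y : Hom X (tc_car t)) : tc_str t ∘ x = tc_str t ∘ y -> x = y.
Proof.
  intros E.
  rewrite <- (comp_id_l x), <- (comp_id_l y), <- tc_inv_str, <- !comp_assoc, E.
  reflexivity.
Qed.

End TerminalCoalgebraLaws.

Section FreeMonadLaws.
Context {A : Category} {K : Functor A A} (m : FreeMonadOn K).
Notation M := (FM m).

Lemma fm_ext_eta_assoc {X Y W : A} (a : Hom (K Y) Y) (f : Hom X Y) (x : Hom W X) :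
  fm_ext m a f ∘ (fm_eta m X ∘ x) = f ∘ x.
Proof. rewrite comp_assoc, fm_ext_eta; reflexivity. Qed.

Lemma fm_ext_hom_assoc {X Y W : A} (a : Hom (K Y) Y) (f : Hom X Y) (x : Hom W _) :
  fm_ext m a f ∘ (fm_phi m X ∘ x) = a ∘ (fmap K (fm_ext m a f) ∘ x).
Proof. rewrite comp_assoc, fm_ext_hom, comp_assoc; reflexivity. Qed.

Lemma fm_eta_nat_assoc {X Y W : A} (f : Hom X Y) (x : Hom W X) :
  fmap M f ∘ (fm_eta m X ∘ x) = fm_eta m Y ∘ (f ∘ x).
Proof. rewrite comp_assoc, fm_eta_nat, comp_assoc; reflexivity. Qed.

Lemma fm_hom_unique {X Y : A} (a : Hom (K Y) Y) (f : Hom X Y) (h1 h2 : Hom (M X) Y) :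
  h1 ∘ fm_eta m X = f -> h1 ∘ fm_phi m X = a ∘ fmap K h1 ->
  h2 ∘ fm_eta m X = f -> h2 ∘ fm_phi m X = a ∘ fmap K h2 -> h1 = h2.
Proof.
  intros. rewrite (fm_ext_unique _ m _ _ a f h1), (fm_ext_unique _ m _ _ a f h2); auto.
Qed.

Lemma fm_ext_fmap {X X' Y : A} (a : Hom (K Y) Y) (f : Hom X' Y) (g : Hom X X') :
  fm_ext m a f ∘ fmap M g = fm_ext m a (f ∘ g).
Proof.
  apply fm_ext_unique.
  - rewrite <- comp_assoc, fm_eta_nat, comp_assoc, fm_ext_eta. reflexivity.
  - rewrite <- comp_assoc, fm_phi_nat, comp_assoc, fm_ext_hom, <- comp_assoc,
      <- fmap_comp.
    reflexivity.
Qed.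

Lemma sharp_fmap {X Y : A} (a : Hom (K Y) Y) (f : Hom X Y) :
  sharp m a ∘ fmap M f = fm_ext m a f.
Proof. unfold sharp. rewrite fm_ext_fmap, comp_id_l. reflexivity. Qed.

Definition fm_mu (X : A) : Hom (M (M X)) (M X) := fm_ext m (fm_phi m X) (idm (M X)).

Lemma fm_mu_eta X : fm_mu X ∘ fm_eta m (M X) = idm _.
Proof. apply fm_ext_eta. Qed.

Lemma fm_mu_phi X : fm_mu X ∘ fm_phi m (M X) = fm_phi m X ∘ fmap K (fm_mu X).
Proof. apply fm_ext_hom. Qed.

Lemma fm_ext_mu {Y Z : A} (a : Hom (K Z) Z) (w : Hom (M Y) Z) :
  w ∘ fm_phi m Y = a ∘ fmap K w -> w ∘ fm_mu Y = fm_ext m a w.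
Proof.
  intros Hw. apply fm_ext_unique.
  - rewrite <- comp_assoc, fm_mu_eta, comp_id_r. reflexivity.
  - rewrite <- comp_assoc, fm_mu_phi, comp_assoc, Hw, <- comp_assoc, <- fmap_comp.
    reflexivity.
Qed.

Lemma fm_mu_assoc X : fm_mu X ∘ fm_mu (M X) = fm_mu X ∘ fmap M (fm_mu X).
Proof.
  rewrite (fm_ext_mu (fm_phi m X) (fm_mu X) (fm_mu_phi X)).
  unfold fm_mu at 2. rewrite fm_ext_fmap, comp_id_l. reflexivity.
Qed.

Lemma fm_phi_mu X : fm_phi m X = fm_mu X ∘ (fm_phi m (M X) ∘ fmap K (fm_eta m (M X))).
Proof.
  rewrite comp_assoc, fm_mu_phi, <- comp_assoc, <- fmap_comp, fm_mu_eta, fmap_id,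
    comp_id_r.
  reflexivity.
Qed.

End FreeMonadLaws.

Global Hint Rewrite <- @comp_assoc : cat.
Global Hint Rewrite <- @fmap_comp : cat.
Global Hint Rewrite @comp_id_l @comp_id_r @copair_inl @copair_inr
  @copair_inl_assoc @copair_inr_assoc @comp_copair @comp_copair_assoc
  @pair_pr1 @pair_pr2 @pair_pr1_assoc @pair_pr2_assoc @pair_comp @pair_comp_assoc
  @fmap_id @fmap_comp_assoc @copmap_def
  @copair_inl_inr @copair_eta
  @fm_ext_eta @fm_ext_eta_assoc @fm_ext_hom @fm_ext_hom_assoc
  @fm_eta_nat @fm_eta_nat_assoc @tc_str_inv @tc_str_inv_assoc : cat.

(* [csimpl] brings both sides to a right-associated normal form; [crewrite E]
   rewrites with [E : f ∘ g = h] also inside such a normal form, where [f ∘ g]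
   only occurs as a prefix [f ∘ (g ∘ x)]. *)
Ltac csimpl := cbn [fobj fmap CopF ConstF FComp] in *; autorewrite with cat.
Ltac csimpl_in H := cbn [fobj fmap CopF ConstF FComp] in H; autorewrite with cat in H.

Tactic Notation "crewrite" uconstr(E) :=
  let HE := fresh "HE" in epose proof E as HE; cbn [fobj fmap CopF ConstF FComp] in HE;
  first [erewrite HE | erewrite (comp_assoc_eq HE)]; clear HE.
Tactic Notation "crewrite" "<-" uconstr(E) :=
  let HE := fresh "HE" in epose proof E as HE; cbn [fobj fmap CopF ConstF FComp] in HE;
  first [erewrite <- HE | erewrite <- (comp_assoc_eq HE)]; clear HE.

Section IterativeMonad.
Context {A : Category} (S : Coproducts A) (G : Functor A A) (It : Iteratable S G).
Implicit Types X Y : Ob A.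

Notation T := (TG S It).
Notation out := (outG S It).
Notation inn := (inG S It).
Notation tau := (tauG S It).
Notation eta := (etaG S It).
Notation mu := (muG S It).
Notation Tmap := (TGmap S It).

Lemma outG_inG X : out X ∘ inn X = idm _.
Proof. exact (tc_str_inv (It X)). Qed.

Lemma inG_outG X : inn X ∘ out X = idm _.
Proof. exact (tc_inv_str (It X)). Qed.

Lemma inG_outG_assoc X W (x : Hom W _) : inn X ∘ (out X ∘ x) = x.
Proof. rewrite comp_assoc, inG_outG, comp_id_l; reflexivity. Qed.

Lemma inG_copair X : inn X = copair S (tau X) (eta X).
Proof. apply copair_unique; reflexivity. Qed.

Lemma copair_tauG_etaG_outG {Y Z : A} (h : Hom (T Y) Z) :
  h = copair S (h ∘ tau Y) (h ∘ eta Y) ∘ out Y.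
Proof.
  rewrite <- comp_copair, <- inG_copair, <- comp_assoc, inG_outG, comp_id_r.
  reflexivity.
Qed.

Lemma outG_tauG X : out X ∘ tau X = cinl S _ _.
Proof. unfold tauG. rewrite comp_assoc, outG_inG, comp_id_l. reflexivity. Qed.

Lemma outG_etaG X : out X ∘ eta X = cinr S _ _.
Proof. unfold etaG. rewrite comp_assoc, outG_inG, comp_id_l. reflexivity. Qed.

Lemma TGmap_outG {X Y} (f : Hom X Y) :
  out Y ∘ Tmap f = copmap S (fmap G (Tmap f)) f ∘ out X.
Proof.
  unfold TGmap. rewrite (tc_unfold_hom _ (It Y)). fold (Tmap f).
  simpl. rewrite comp_assoc, <- copmap_comp, comp_id_r, comp_id_l. reflexivity.
Qed.

Lemma TGmap_inG {X Y} (f : Hom X Y) :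
  Tmap f ∘ inn X = inn Y ∘ copmap S (fmap G (Tmap f)) f.
Proof.
  rewrite <- (inG_outG_assoc Y _ (Tmap f ∘ inn X)). crewrite (TGmap_outG f).
  rewrite <- !comp_assoc, outG_inG, comp_id_r. reflexivity.
Qed.

Lemma TGmap_etaG {X Y} (f : Hom X Y) : Tmap f ∘ eta X = eta Y ∘ f.
Proof. unfold etaG. rewrite comp_assoc, TGmap_inG. csimpl. reflexivity. Qed.

Lemma TGmap_tauG {X Y} (f : Hom X Y) : Tmap f ∘ tau X = tau Y ∘ fmap G (Tmap f).
Proof. unfold tauG. rewrite comp_assoc, TGmap_inG. csimpl. reflexivity. Qed.

(* Both [h1] and [h2] are the restriction to [T Y] of the unique coalgebra
   morphism from [T Y + T X] that is [g] on variables and the identity on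
   [T X]. *)
Lemma TG_hom_unique {X Y} (g : Hom Y (T X)) (h1 h2 : Hom (T Y) (T X)) :
  h1 ∘ eta Y = g -> h1 ∘ tau Y = tau X ∘ fmap G h1 ->
  h2 ∘ eta Y = g -> h2 ∘ tau Y = tau X ∘ fmap G h2 ->
  h1 = h2.
Proof.
  intros E1 T1 E2 T2.
  set (base := copmap S (fmap G (cinr S (T Y) (T X))) (idm X) ∘ out X).
  set (delta := copair S (copair S (cinl S _ X ∘ fmap G (cinl S (T Y) (T X))) (base ∘ g)
                            ∘ out Y) base).
  assert (Hcopair : forall h, h ∘ eta Y = g -> h ∘ tau Y = tau X ∘ fmap G h ->
            copair S h (idm (T X)) = tc_unfold (It X) delta).
  { intros h Eh Th. apply (tc_unfold_unique _ (It X)). change (tc_str (It X)) with (out X).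
    apply copair_ext.
    - subst delta base. csimpl. rewrite (copair_tauG_etaG_outG h) at 1. rewrite Eh, Th.
      csimpl. crewrite (outG_tauG X). reflexivity.
    - subst delta base. csimpl. reflexivity. }
  rewrite <- (copair_inl S h1 (idm (T X))), <- (copair_inl S h2 (idm (T X))),
    (Hcopair h1), (Hcopair h2); auto.
Qed.

Lemma muG_etaG_tauG X :
  mu X ∘ eta (T X) = idm _ /\ mu X ∘ tau (T X) = tau X ∘ fmap G (mu X).
Proof.
  unfold muG. cbv zeta.
  set (base := copmap S (fmap G (cinr S (T (T X)) (T X))) (idm X) ∘ out X).
  set (delta := copair S (copair S (cinl S (G (cop S (T (T X)) (T X))) X
                   ∘ fmap G (cinl S (T (T X)) (T X))) base ∘ out (T X)) base).
  set (F := tc_unfold (It X) delta).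
  assert (HF : out X ∘ F = copmap S (fmap G F) (idm X) ∘ delta)
    by exact (tc_unfold_hom _ (It X) _ delta).
  assert (Finr : F ∘ cinr S (T (T X)) (T X) = idm _).
  { apply (tc_hom_unique (It X) (out X)); change (tc_str (It X)) with (out X).
    - rewrite (comp_assoc_eq HF). subst delta base. csimpl. reflexivity.
    - csimpl. reflexivity. }
  split; rewrite <- (inG_outG_assoc X _ (F ∘ _ ∘ _)); csimpl; crewrite HF; subst delta;
    csimpl.
  - crewrite (outG_etaG (T X)). csimpl. subst base. csimpl. crewrite Finr. csimpl.
    apply inG_outG.
  - crewrite (outG_tauG (T X)). csimpl. unfold tauG. csimpl. reflexivity.
Qed.

Lemma muG_etaG X : mu X ∘ eta (T X) = idm _.
Proof. apply muG_etaG_tauG. Qed.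

Lemma muG_tauG X : mu X ∘ tau (T X) = tau X ∘ fmap G (mu X).
Proof. apply muG_etaG_tauG. Qed.

Ltac tsimpl := repeat (csimpl; first
  [ crewrite (muG_etaG _) | crewrite (muG_tauG _)
  | crewrite (TGmap_etaG _) | crewrite (TGmap_tauG _) ]); csimpl.

Lemma muG_assoc X : mu X ∘ Tmap (mu X) = mu X ∘ mu (T X).
Proof. apply (TG_hom_unique (mu X)); tsimpl; reflexivity. Qed.

Lemma muG_natural {X Y} (f : Hom X Y) : mu Y ∘ Tmap (Tmap f) = Tmap f ∘ mu X.
Proof. apply (TG_hom_unique (Tmap f)); tsimpl; reflexivity. Qed.

Lemma kappaG_natural {X Y} (f : Hom X Y) :
  Tmap f ∘ kappaG S It X = kappaG S It Y ∘ fmap G f.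
Proof. unfold kappaG. tsimpl. reflexivity. Qed.

Lemma muG_kappaG X : mu X ∘ kappaG S It (T X) = tau X.
Proof. unfold kappaG. tsimpl. reflexivity. Qed.

End IterativeMonad.

Section GuardedSchemes.
Context {A : Category} (S : Coproducts A) (L V : Functor A A)
  (It : Iteratable S (CopF S L V)).
Context {X0 : A} (a : Hom (L X0) X0) (Ha : is_cia S L a).
Context (f : forall X : A, Hom (V X) (L (TG S It X)))
  (f_nat : forall (X Y : A) (g : Hom X Y),
     fmap L (TGmap S It g) ∘ f X = f Y ∘ fmap V g).

Notation T := (TG S It).
Notation G := (CopF S L V).
Notation tau := (tauG S It).
Notation eta := (etaG S It).
Notation mu := (muG S It).
Notation Tmap := (TGmap S It).

Lemma inG_solution_unique {Y : A} (E : Hom (cop S (G (T Y)) Y) (cop S (L (T Y)) X0))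
  (h1 h2 : Hom (T Y) X0) :
  h1 ∘ inG S It Y = copair S a (idm X0) ∘ copmap S (fmap L h1) (idm X0) ∘ E ->
  h2 ∘ inG S It Y = copair S a (idm X0) ∘ copmap S (fmap L h2) (idm X0) ∘ E ->
  h1 = h2.
Proof.
  intros E1 E2.
  destruct (Ha (T Y) (E ∘ outG S It Y)) as [h [_ U]].
  transitivity h; [symmetry|]; apply U.
  - rewrite comp_assoc, <- E1, <- comp_assoc, inG_outG, comp_id_r. reflexivity.
  - rewrite comp_assoc, <- E2, <- comp_assoc, inG_outG, comp_id_r. reflexivity.
Qed.

Lemma inG_solution_exists {Y : A} (E : Hom (cop S (G (T Y)) Y) (cop S (L (T Y)) X0)) :
  exists h : Hom (T Y) X0,
    h ∘ inG S It Y = copair S a (idm X0) ∘ copmap S (fmap L h) (idm X0) ∘ E.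
Proof.
  destruct (Ha (T Y) (E ∘ outG S It Y)) as [h [Eh _]].
  exists h. rewrite Eh at 1. rewrite <- !comp_assoc, outG_inG, comp_id_r. reflexivity.
Qed.

(* On a V-node the guard [f] exposes an L-node, which [a] then evaluates. *)
Definition tau_law {Y : A} (h : Hom (T Y) X0) : Prop :=
  h ∘ tau Y = copair S (a ∘ fmap L h) (a ∘ (fmap L (h ∘ mu Y) ∘ f (T Y))).

Definition eta_law {Y : A} (r : Hom Y (cop S (L (T Y)) X0)) (h : Hom (T Y) X0) : Prop :=
  h ∘ eta Y = copair S (a ∘ fmap L h) (idm X0) ∘ r.

Definition guarded_flat_equation {Y : A} (r : Hom Y (cop S (L (T Y)) X0)) :
  Hom (cop S (G (T Y)) Y) (cop S (L (T Y)) X0) :=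
  copair S (copair S (cinl S (L (T Y)) X0) (cinl S _ X0 ∘ (fmap L (mu Y) ∘ f (T Y)))) r.

Lemma guarded_flat_equation_solution {Y : A} (r : Hom Y (cop S (L (T Y)) X0))
  (h : Hom (T Y) X0) : tau_law h -> eta_law r h ->
  h ∘ inG S It Y
  = copair S a (idm X0) ∘ copmap S (fmap L h) (idm X0) ∘ guarded_flat_equation r.
Proof.
  unfold tau_law, eta_law, guarded_flat_equation; intros E1 E2.
  rewrite inG_copair, comp_copair, E1, E2. csimpl. reflexivity.
Qed.

Lemma tau_eta_law_unique {Y : A} (r : Hom Y (cop S (L (T Y)) X0)) (h1 h2 : Hom (T Y) X0) :
  tau_law h1 -> eta_law r h1 -> tau_law h2 -> eta_law r h2 -> h1 = h2.
Proof.
  intros. apply (inG_solution_unique (guarded_flat_equation r));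
    apply guarded_flat_equation_solution; auto.
Qed.

Lemma tau_eta_law_exists {Y : A} (r : Hom Y (cop S (L (T Y)) X0)) :
  exists h : Hom (T Y) X0, tau_law h /\ eta_law r h.
Proof.
  destruct (inG_solution_exists (guarded_flat_equation r)) as [h Eh].
  exists h. unfold tau_law, eta_law, guarded_flat_equation in *. split.
  - unfold tauG. rewrite comp_assoc, Eh. csimpl. reflexivity.
  - unfold etaG. rewrite comp_assoc, Eh. csimpl. reflexivity.
Qed.

Section Solution.
Variable beta : Hom (T X0) X0.
Hypothesis beta_tau : tau_law beta.
Hypothesis beta_eta : beta ∘ eta X0 = idm X0.

Definition guarded_solution : Hom (V X0) X0 := a ∘ (fmap L beta ∘ f X0).

Lemma tau_law_TGmap {Y : A} (g : Hom Y X0) : tau_law (beta ∘ Tmap g).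
Proof.
  unfold tau_law. rewrite <- comp_assoc, (TGmap_tauG S _ It), comp_assoc, beta_tau.
  csimpl. crewrite <- (f_nat _ _ _). csimpl. crewrite (muG_natural S _ It _). reflexivity.
Qed.

Lemma beta_muG : beta ∘ mu X0 = beta ∘ Tmap beta.
Proof.
  apply (tau_eta_law_unique (Y := T X0) (cinr S _ X0 ∘ beta)).
  - unfold tau_law. csimpl. crewrite (muG_tauG S _ It). crewrite beta_tau. csimpl.
    crewrite <- (f_nat _ _ _). csimpl. crewrite (muG_assoc S _ It _). reflexivity.
  - unfold eta_law. csimpl. crewrite (muG_etaG S _ It). csimpl. reflexivity.
  - apply tau_law_TGmap.
  - unfold eta_law. csimpl. crewrite (TGmap_etaG S _ It beta). crewrite beta_eta.
    csimpl. reflexivity.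
Qed.

Lemma beta_tauG : beta ∘ tau X0 = copair S a guarded_solution ∘ fmap G beta.
Proof.
  rewrite beta_tau. unfold guarded_solution. csimpl. rewrite beta_muG.
  crewrite <- (f_nat _ _ _). csimpl. reflexivity.
Qed.

Lemma beta_kappaG : beta ∘ kappaG S It X0 = copair S a guarded_solution.
Proof.
  unfold kappaG. crewrite beta_tauG. csimpl. crewrite beta_eta. csimpl. reflexivity.
Qed.

Lemma guarded_solution_interpreted (e : forall X : A, Hom (V X) (T X))
  (e_guard : forall X : A, e X = tau X ∘ cinl S (L (T X)) (V (T X)) ∘ f X) :
  is_interpreted_solution S L V It e a guarded_solution.
Proof.
  exists beta. split; [split; [exact beta_eta | exact beta_muG] | split].
  - exact beta_kappaG.
  - rewrite e_guard. csimpl. crewrite beta_tauG. csimpl. reflexivity.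
Qed.

Lemma interpreted_solution_unique (e : forall X : A, Hom (V X) (T X))
  (e_guard : forall X : A, e X = tau X ∘ cinl S (L (T X)) (V (T X)) ∘ f X)
  (s : Hom (V X0) X0) :
  is_interpreted_solution S L V It e a s -> s = guarded_solution.
Proof.
  intros [beta' [[E1 E2] [Ek Es]]].
  assert (Tau' : beta' ∘ tau X0 = copair S a s ∘ fmap G beta').
  { rewrite <- (muG_kappaG S _ It X0), comp_assoc, E2, <- comp_assoc,
      (kappaG_natural S _ It), comp_assoc, Ek.
    reflexivity. }
  assert (Es' : s = a ∘ (fmap L beta' ∘ f X0)).
  { rewrite Es at 1. rewrite e_guard. csimpl. crewrite Tau'. csimpl. reflexivity. }
  assert (Eb : beta' = beta).
  { apply (tau_eta_law_unique (Y := X0) (cinr S _ X0)).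
    - unfold tau_law. rewrite Tau'. csimpl. rewrite Es'. csimpl.
      crewrite <- (f_nat _ _ _). csimpl. rewrite E2. reflexivity.
    - unfold eta_law. rewrite E1. csimpl. reflexivity.
    - exact beta_tau.
    - unfold eta_law. rewrite beta_eta. csimpl. reflexivity. }
  rewrite Es', Eb. reflexivity.
Qed.

(* Every solution [h] is recovered as [beta . T h . eta], and [beta . T h]
   is pinned down by the tau and eta laws. *)
Lemma guarded_solution_cia : is_cia S G (copair S a guarded_solution).
Proof.
  intros Y e'.
  pose (u := tc_unfold (It X0) e').
  assert (Hu : outG S It X0 ∘ u = copmap S (fmap G u) (idm X0) ∘ e')
    by exact (tc_unfold_hom _ (It X0) _ e').
  pose (r := copair S (copair S (cinl S _ X0 ∘ fmap L (eta Y)) (cinl S _ X0 ∘ f Y))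
                (cinr S _ X0) ∘ e').
  assert (Laws : forall h : Hom Y X0,
    h = copair S (copair S a guarded_solution) (idm X0) ∘ copmap S (fmap G h) (idm X0) ∘ e' ->
    tau_law (beta ∘ Tmap h) /\ eta_law r (beta ∘ Tmap h)).
  { intros h Hh. split; [apply tau_law_TGmap|].
    unfold eta_law, r. csimpl. crewrite (TGmap_etaG S _ It h). crewrite beta_eta. csimpl.
    rewrite Hh at 1. unfold guarded_solution. csimpl. crewrite <- (f_nat _ _ _). csimpl.
    reflexivity. }
  assert (Recover : forall h : Hom Y X0, beta ∘ Tmap h ∘ eta Y = h).
  { intros h. csimpl. crewrite (TGmap_etaG S _ It h). crewrite beta_eta. csimpl.
    reflexivity. }
  assert (Eu : beta ∘ u = copair S (copair S a guarded_solution) (idm X0)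
                            ∘ copmap S (fmap G (beta ∘ u)) (idm X0) ∘ e').
  { rewrite (copair_tauG_etaG_outG S _ It beta) at 1. rewrite beta_tauG, beta_eta.
    csimpl. crewrite Hu. csimpl. reflexivity. }
  exists (beta ∘ u). split; [exact Eu|].
  intros h Hh.
  destruct (Laws h Hh) as [T1 E1]. destruct (Laws (beta ∘ u) Eu) as [T2 E2].
  rewrite <- (Recover h), <- (Recover (beta ∘ u)),
    (tau_eta_law_unique r _ _ T1 E1 T2 E2).
  reflexivity.
Qed.

End Solution.

Theorem guarded_rps_unique_solution (e : forall X : A, Hom (V X) (T X))
  (e_guard : forall X : A, e X = tau X ∘ cinl S (L (T X)) (V (T X)) ∘ f X) :
  exists s : Hom (V X0) X0,
    is_interpreted_solution S L V It e a s /\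
    (forall s', is_interpreted_solution S L V It e a s' -> s' = s) /\
    is_cia S G (copair S a s).
Proof.
  destruct (tau_eta_law_exists (cinr S (L (T X0)) X0)) as [beta [Btau Beta]].
  unfold eta_law in Beta. csimpl_in Beta.
  exists (guarded_solution beta). split; [| split].
  - exact (guarded_solution_interpreted beta Btau Beta e e_guard).
  - exact (interpreted_solution_unique beta Btau Beta e e_guard).
  - exact (guarded_solution_cia beta Btau Beta).
Qed.

End GuardedSchemes.

Section GSOSLifting.
Context {A : Category} (P : Products A) (H K : Functor A A) (m : FreeMonadOn K)
  (l : forall X : A, Hom (K (prod P (H X) X)) (H (FM m X)))
  (Hl : is_GSOS_rule P H K m l).
Notation M := (FM m).
Notation mu := (fm_mu m).

Definition gsos_alg (Z : A) : Hom (K (prod P (H (M Z)) (M Z))) (prod P (H (M Z)) (M Z)) :=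
  pair P (fmap H (mu Z) ∘ l (M Z)) (fm_phi m Z ∘ fmap K (pr2 P _ _)).

(* Defined by freeness of M into the K-algebra [gsos_alg] on HMZ x MZ; the
   second component of that map is the identity ([fm_ext_gsos_alg]). *)
Definition gsos_extend {Z : A} (zeta : Hom Z (H (M Z))) : Hom (M Z) (H (M Z)) :=
  pr1 P _ _ ∘ fm_ext m (gsos_alg Z) (pair P zeta (fm_eta m Z)).

Lemma fm_ext_gsos_alg {Z : A} (zeta : Hom Z (H (M Z))) :
  fm_ext m (gsos_alg Z) (pair P zeta (fm_eta m Z)) = pair P (gsos_extend zeta) (idm _).
Proof.
  apply pair_unique; [reflexivity|].
  apply (fm_hom_unique m (fm_phi m Z) (fm_eta m Z)); unfold gsos_alg; csimpl; reflexivity.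
Qed.

Lemma gsos_extend_eta {Z : A} (zeta : Hom Z (H (M Z))) :
  gsos_extend zeta ∘ fm_eta m Z = zeta.
Proof. unfold gsos_extend. csimpl. reflexivity. Qed.

Lemma gsos_extend_phi {Z : A} (zeta : Hom Z (H (M Z))) :
  gsos_extend zeta ∘ fm_phi m Z
  = fmap H (mu Z) ∘ (l (M Z) ∘ fmap K (pair P (gsos_extend zeta) (idm _))).
Proof.
  unfold gsos_extend at 1.
  rewrite <- comp_assoc, fm_ext_hom, fm_ext_gsos_alg. unfold gsos_alg. csimpl.
  reflexivity.
Qed.

Lemma gsos_extend_mu {Z : A} (zeta : Hom Z (H (M Z))) :
  gsos_extend zeta ∘ mu Z
  = fmap H (mu Z) ∘ gsos_extend (fmap H (fm_eta m (M Z)) ∘ gsos_extend zeta).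
Proof.
  set (Xi := gsos_extend (fmap H (fm_eta m (M Z)) ∘ gsos_extend zeta)).
  assert (E : pair P (gsos_extend zeta ∘ mu Z) (mu Z) = pair P (fmap H (mu Z) ∘ Xi) (mu Z)).
  { apply (fm_hom_unique m (gsos_alg Z) (pair P (gsos_extend zeta) (idm _))).
    - csimpl. crewrite (fm_mu_eta m). csimpl. reflexivity.
    - csimpl. crewrite (fm_mu_phi m). crewrite (gsos_extend_phi zeta). unfold gsos_alg.
      csimpl. reflexivity.
    - subst Xi. csimpl. crewrite (gsos_extend_eta (fmap H (fm_eta m (M Z)) ∘ gsos_extend zeta)).
      csimpl. crewrite (fm_mu_eta m). csimpl. reflexivity.
    - subst Xi. csimpl.
      crewrite (gsos_extend_phi (fmap H (fm_eta m (M Z)) ∘ gsos_extend zeta)). csimpl.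
      crewrite (fm_mu_assoc m Z).
      rewrite (fmap_comp H (mu Z) (fmap M (mu Z))), <- (comp_assoc (fmap H (mu Z))).
      crewrite (Hl _ _ (mu Z)). unfold gsos_alg. csimpl. crewrite (fm_mu_phi m Z).
      reflexivity. }
  apply (f_equal (fun z => pr1 P _ _ ∘ z)) in E. csimpl_in E. exact E.
Qed.

Context (Ct : TerminalCoalgebra H) (b : Hom (K (tc_car Ct)) (tc_car Ct))
  (Hb : interpretation_eq P H K m Ct l b) (S : Coproducts A).
Notation C := (tc_car Ct).
Notation c := (tc_str Ct).

(* Both [<c . w, w>] and [<H w . gsos_extend theta, w>] are K-algebra
   morphisms into [<H b# . l, b . K pr2>], whose first component is the
   interpretation equation, and they agree on generators. *)
Lemma fm_ext_interpretation_tc_hom {Y : A} (theta : Hom Y (H (M Y))) (w0 : Hom Y C) :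
  c ∘ w0 = fmap H (fm_ext m b w0) ∘ theta ->
  c ∘ fm_ext m b w0 = fmap H (fm_ext m b w0) ∘ gsos_extend theta.
Proof.
  intros Hyp.
  set (w := fm_ext m b w0).
  set (beta := pair P (fmap H (sharp m b) ∘ l C) (b ∘ fmap K (pr2 P (H C) C))).
  assert (Ew : w ∘ mu Y = sharp m b ∘ fmap M w).
  { rewrite sharp_fmap. apply fm_ext_mu. subst w. apply fm_ext_hom. }
  assert (E : pair P (c ∘ w) w = pair P (fmap H w ∘ gsos_extend theta) w).
  { apply (fm_hom_unique m beta (pair P (c ∘ w0) w0)).
    - subst w. csimpl. reflexivity.
    - subst w beta. csimpl. crewrite Hb. csimpl. reflexivity.
    - subst w. csimpl. crewrite (gsos_extend_eta theta). rewrite <- Hyp. csimpl.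
      reflexivity.
    - csimpl. crewrite (gsos_extend_phi theta). csimpl. rewrite Ew.
      rewrite (fmap_comp H (sharp m b) (fmap M w)), <- (comp_assoc (fmap H (sharp m b))).
      crewrite (Hl _ _ w). subst beta. csimpl. subst w. csimpl. reflexivity. }
  apply (f_equal (fun z => pr1 P _ _ ∘ z)) in E. csimpl_in E. exact E.
Qed.

(* Both [u . mu] and the b-extension of [u] are coalgebra morphisms out of the
   same H-coalgebra on [M (M Z)], so they coincide; composing with
   [phi . K eta] then shows that [u] is a K-algebra morphism. *)
Lemma unfold_gsos_extend_fm_ext {Z : A} (zeta : Hom Z (H (M Z))) :
  tc_unfold Ct (gsos_extend zeta)
  = fm_ext m b (tc_unfold Ct (gsos_extend zeta) ∘ fm_eta m Z).
Proof.
  set (u := tc_unfold Ct (gsos_extend zeta)).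
  assert (Hu : c ∘ u = fmap H u ∘ gsos_extend zeta) by apply tc_unfold_hom.
  set (Xi := gsos_extend (fmap H (fm_eta m (M Z)) ∘ gsos_extend zeta)).
  assert (Emu : u ∘ mu Z = tc_unfold Ct Xi).
  { apply tc_unfold_unique. csimpl. crewrite Hu. csimpl. crewrite (gsos_extend_mu zeta).
    csimpl. reflexivity. }
  assert (Eext : fm_ext m b u = tc_unfold Ct Xi).
  { apply tc_unfold_unique. apply fm_ext_interpretation_tc_hom. rewrite Hu. csimpl.
    reflexivity. }
  apply fm_ext_unique; [reflexivity|].
  rewrite (fm_phi_mu m Z). csimpl. crewrite Emu. crewrite <- Eext. csimpl. reflexivity.
Qed.

Definition flat_equation_coalgebra {Y : A} (e : Hom Y (cop S (H (M Y)) C)) :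
  Hom (cop S Y C) (H (M (cop S Y C))) :=
  copair S (copair S (fmap H (fmap M (cinl S Y C)))
                     (fmap H (fm_eta m (cop S Y C) ∘ cinr S Y C) ∘ c) ∘ e)
           (fmap H (fm_eta m (cop S Y C) ∘ cinr S Y C) ∘ c).

Lemma unfold_flat_equation_coalgebra_inr {Y : A} (e : Hom Y (cop S (H (M Y)) C)) :
  tc_unfold Ct (gsos_extend (flat_equation_coalgebra e)) ∘ (fm_eta m _ ∘ cinr S Y C)
  = idm C.
Proof.
  assert (Hu := tc_unfold_hom _ Ct _ (gsos_extend (flat_equation_coalgebra e))).
  apply (tc_hom_unique Ct c).
  - crewrite Hu. csimpl. crewrite (gsos_extend_eta (flat_equation_coalgebra e)).
    unfold flat_equation_coalgebra. csimpl. reflexivity.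
  - csimpl. reflexivity.
Qed.

Theorem interpretation_cia : is_cia S (FComp H M) (tc_inv Ct ∘ fmap H (sharp m b)).
Proof.
  intros Y e.
  set (zeta := flat_equation_coalgebra e).
  set (u := tc_unfold Ct (gsos_extend zeta)).
  assert (Hu : c ∘ u = fmap H u ∘ gsos_extend zeta) by apply tc_unfold_hom.
  assert (Uinr := unfold_flat_equation_coalgebra_inr e). fold zeta u in Uinr.
  set (h := u ∘ (fm_eta m (cop S Y C) ∘ cinl S Y C)).
  assert (Uinl : u ∘ fmap M (cinl S Y C) = fm_ext m b h).
  { assert (Ualg : u = fm_ext m b (u ∘ fm_eta m (cop S Y C)))
      by apply unfold_gsos_extend_fm_ext.
    rewrite Ualg at 1. rewrite fm_ext_fmap. subst h. csimpl. reflexivity. }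
  exists h. split.
  - apply (tc_str_mono Ct). subst h. csimpl. crewrite Hu. csimpl.
    crewrite (gsos_extend_eta zeta). subst zeta. unfold flat_equation_coalgebra. csimpl.
    crewrite Uinr. csimpl. crewrite Uinl. crewrite (sharp_fmap m b). reflexivity.
  - intros h' Hh'.
    set (w := fm_ext m b (copair S h' (idm C))).
    assert (Hw : c ∘ copair S h' (idm C) = fmap H w ∘ zeta).
    { apply copair_ext.
      - csimpl. rewrite Hh' at 1. csimpl. crewrite (sharp_fmap m b).
        subst zeta w. unfold flat_equation_coalgebra. csimpl. crewrite fm_ext_fmap. csimpl.
        reflexivity.
      - subst zeta w. unfold flat_equation_coalgebra. csimpl. reflexivity. }
    assert (Ew : w = u)
      by (apply tc_unfold_unique; apply fm_ext_interpretation_tc_hom; exact Hw).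
    subst h. rewrite <- Ew. subst w. csimpl. reflexivity.
Qed.

End GSOSLifting.

Theorem mainTheorem6
  (A : Category) (P : Products A) (S : Coproducts A)
  (H : Functor A A) (Ct : TerminalCoalgebra H)
  (K : Functor A A) (m : FreeMonadOn K)
  (l : forall X : A, Hom (K (prod P (H X) X)) (H (FM m X)))
  (Hl : is_GSOS_rule P H K m l)
  (b : Hom (K (tc_car Ct)) (tc_car Ct))
  (Hb : is_interpretation P H K m Ct l b)
  (V : Functor A A)
  (It : Iteratable S (CopF S (FComp H (FM m)) V))
  (e : forall X : A, Hom (V X) (TG S It X))
  (He : is_rps S (FComp H (FM m)) V It e)
  (Hg : is_guarded_rps S (FComp H (FM m)) V It e) :
  let k : Hom (H (FM m (tc_car Ct))) (tc_car Ct) :=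
      tc_inv Ct ∘ fmap H (sharp m b) in
  exists s : Hom (V (tc_car Ct)) (tc_car Ct),
    is_interpreted_solution S (FComp H (FM m)) V It e k s /\
    (forall s' : Hom (V (tc_car Ct)) (tc_car Ct),
        is_interpreted_solution S (FComp H (FM m)) V It e k s' -> s' = s) /\
    is_cia S (CopF S (FComp H (FM m)) V) (copair S k s).
Proof.
  intros k.
  destruct Hb as [Hb_eq _].
  destruct Hg as [f [f_nat e_guard]].
  apply (guarded_rps_unique_solution S (FComp H (FM m)) V It k
           (interpretation_cia P H K m l Hl Ct b Hb_eq S) f f_nat e e_guard).
Qed.
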